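(* Let $a,b\in\mathbb{C}$ and let $m,n\ge 0$ be integers. Define $S_n(a,b,m)=\sum_{k=0}^n\binom{n}{k}a^kb^{n-k}H_k(m)$. Then $$S_n(a,b,m)=\sum_{j=0}^m\binom{m}{j}\sum_{k=0}^n H_k(j)\,(a+b)^k\,\frac{(m-j)!}{(n-k)!}\,(-1)^{n-k}\,b^{n-k}\,s(n-k,m-j).$$
   Context: For integers $m\ge 1$, $n\ge 0$, the multiple harmonic-like numbers are $H_n(m)=\sum_{1\le k_1+k_2+\cdots+k_m\le n}\frac{1}{k_1k_2\cdots k_m}$ (sum over positive integers $k_1,\dots,k_m$), with $H_n(0)=1$ for $n\ge 0$ and $H_0(m)=0$ for $m\ge1$. Equivalently, $\sum_{n\ge0}H_n(m)z^n=\frac{(-\ln(1-z))^m}{1-z}$. The (signed) Stirling numbers of the first kind $s(n,k)$ are defined by $\sum_{n\ge k}s(n,k)\frac{z^n}{n!}=\frac{\ln^k(1+z)}{k!}$, with $s(n,k)=0$ for $n<k$. Convention $0^0=1$. *)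

From HB Require Import structures.
From mathcomp Require Import all_boot all_order all_algebra.
Set Implicit Arguments. Unset Strict Implicit. Unset Printing Implicit Defensive.
Import Order.TTheory GRing.Theory Num.Theory.
Local Open Scope ring_scope.

(* Each k_i lies in 'I_(n.+1) (since k_i <= n).  For m = 0 the
   only tuple is the empty one, giving H_n(0) = 1; for n = 0, m >= 1 the sum is
   empty, giving H_0(m) = 0, as in the paper's conventions. *)
Definition Hmult (F : fieldType) (n m : nat) : F :=
  \sum_(k : {ffun 'I_m -> 'I_n.+1} |
          [forall i, (0 < k i)%N] && (\sum_i (k i : nat) <= n)%N)
     (\prod_i ((k i : nat)%:R : F))^-1.

(* Signed Stirling numbers of the first kind s(n,k), via the standard
   recurrence s(n+1,k+1) = s(n,k) - n s(n,k+1), s(0,0)=1,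
   s(0,k+1) = 0, s(n+1,0) = 0, equivalent to sum_n s(n,k) z^n/n! = ln^k(1+z)/k!. *)
Fixpoint stirling1 (n k : nat) : int :=
  match n, k with
  | 0, 0 => 1
  | 0, _.+1 => 0
  | _.+1, 0 => 0
  | n'.+1, k'.+1 => stirling1 n' k' - (n'%:Z) * stirling1 n' k'.+1
  end.

Definition Ssum (F : fieldType) (n : nat) (a b : F) (m : nat) : F :=
  \sum_(k < n.+1) ('C(n, k))%:R * a ^+ k * b ^+ (n - k) * Hmult F k m.

From HB Require Import structures.
From mathcomp Require Import all_boot all_order all_algebra.
From mathcomp Require Import ring.
Import Order.TTheory GRing.Theory Num.Theory.
Set Implicit Arguments. Unset Strict Implicit. Unset Printing Implicit Defensive.
Local Open Scope ring_scope.

(* With L(z) = -ln(1 - z), the numbers H_k(m) are the coefficients of L(z)^m / (1 - z), so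
   sum_n S_n z^n = H(az / (1 - bz)) / (1 - bz).  Since 1 - az / (1 - bz) = (1 - (a+b)z) / (1 - bz),
   this is (L((a+b)z) - L(bz))^m / (1 - (a+b)z); expanding the m-th power binomially and reading
   the coefficients of (-L(bz))^p = ln(1 - bz)^p off the Stirling numbers gives the right-hand
   side.  Only coefficients up to z^n matter, so all series are truncated to polynomials and
   compared modulo X^(n+1); the identity for L is obtained by comparing derivatives. *)

Lemma hockey_stick i r : \sum_(j < r.+1) 'C(j + i, i) = 'C(r + i.+1, i.+1).
Proof.
elim: r => [|r IH]; first by rewrite big_ord1 add0n binn add0n binn.
by rewrite big_ord_recr /= IH [in RHS]addSn binS addnS addSn.
Qed.

Section CongruenceModXn.
Variable F : fieldType.
Implicit Types (p q r s u v w : {poly F}) (M K : nat).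

Definition eqmodX M p q := 'X^M %| p - q.

Lemma eqmodX_refl M p : eqmodX M p p.
Proof. by rewrite /eqmodX subrr dvdp0. Qed.

Lemma eqmodX_sym M p q : eqmodX M p q -> eqmodX M q p.
Proof. by rewrite /eqmodX -opprB dvdpNr. Qed.

Lemma eqmodX_trans M q p r : eqmodX M p q -> eqmodX M q r -> eqmodX M p r.
Proof.
by move=> hpq hqr; rewrite /eqmodX -(subrKA q) addrC; apply: dvdp_add.
Qed.

Lemma eqmodXD M p q r s : eqmodX M p q -> eqmodX M r s -> eqmodX M (p + r) (q + s).
Proof. by move=> hpq hrs; rewrite /eqmodX opprD addrACA; apply: dvdp_add. Qed.

Lemma eqmodXN M p q : eqmodX M p q -> eqmodX M (- p) (- q).
Proof. by rewrite /eqmodX -opprD dvdpNr. Qed.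

Lemma eqmodXB M p q r s : eqmodX M p q -> eqmodX M r s -> eqmodX M (p - r) (q - s).
Proof. by move=> hpq /eqmodXN; apply: eqmodXD. Qed.

Lemma eqmodXM M p q r s : eqmodX M p q -> eqmodX M r s -> eqmodX M (p * r) (q * s).
Proof.
move=> hpq hrs; rewrite /eqmodX.
have -> : p * r - q * s = (p - q) * r + q * (r - s) by ring.
by apply: dvdp_add; [apply: dvdp_mulr | apply: dvdp_mull].
Qed.

Lemma eqmodXMl M p q r : eqmodX M p q -> eqmodX M (r * p) (r * q).
Proof. exact/eqmodXM/eqmodX_refl. Qed.

Lemma eqmodXX M p q k : eqmodX M p q -> eqmodX M (p ^+ k) (q ^+ k).
Proof.
move=> hpq; elim: k => [|k IH]; first exact: eqmodX_refl.
by rewrite !exprS; apply: eqmodXM.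
Qed.

Lemma eqmodXW K M p q : (M <= K)%N -> eqmodX K p q -> eqmodX M p q.
Proof. by move=> leMK; apply/dvdp_trans/dvdp_exp2l. Qed.

Lemma eqmodX_cancel M u u' v w :
  eqmodX M (u * u') 1 -> eqmodX M (u * v) (u * w) -> eqmodX M v w.
Proof.
move=> hu huvw; have hK x : eqmodX M (x * (u * u')) x.
  by rewrite -[X in eqmodX _ _ X]mulr1; apply: eqmodXMl.
apply: eqmodX_trans (eqmodX_sym (hK v)) _; apply: eqmodX_trans (hK w).
by rewrite !mulrA ![_ * u]mulrC; apply: eqmodXM huvw (eqmodX_refl _ _).
Qed.

Lemma eqmodX_coefP M p q :
  reflect (forall i, (i < M)%N -> p`_i = q`_i) (eqmodX M p q).
Proof.
rewrite /eqmodX /dvdp -Pdiv.IdomainMonic.take_poly_modp.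
apply: (iffP eqP) => [h i ltiM|h].
  have /eqP := congr1 (fun r => r`_i) h.
  by rewrite /= coef_take_poly ltiM coefB coef0 subr_eq0 => /eqP.
apply/polyP => i; rewrite coef_take_poly coef0 coefB.
by case: ifP => // /h ->; rewrite subrr.
Qed.

Lemma eqmodX_poly M K1 K2 (E : nat -> F) : (M <= K1)%N -> (M <= K2)%N ->
  eqmodX M (\poly_(i < K1) E i) (\poly_(i < K2) E i).
Proof.
move=> le1 le2; apply/eqmodX_coefP => i ltiM.
by rewrite !coef_poly (leq_trans ltiM le1) (leq_trans ltiM le2).
Qed.

Lemma eqmodX_deriv M p q : eqmodX M.+1 p q -> eqmodX M p^`() q^`().
Proof.
by move=> /eqmodX_coefP h; apply/eqmodX_coefP => i ltiM; rewrite !coef_deriv h.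
Qed.

End CongruenceModXn.

Lemma eqmodX_antideriv (F : numFieldType) M (p q : {poly F}) :
  p`_0 = q`_0 -> eqmodX M p^`() q^`() -> eqmodX M.+1 p q.
Proof.
move=> h0 /eqmodX_coefP h; apply/eqmodX_coefP => -[//|i] ltiM.
have := h i ltiM; rewrite !coef_deriv => /eqP.
by rewrite -subr_eq0 -mulrnBl mulrn_eq0 /= subr_eq0 => /eqP.
Qed.

Section TruncatedSeries.
Variable F : fieldType.
Implicit Types (x : F) (p s t : {poly F}) (M N : nat).

Definition geom x M : {poly F} := \poly_(i < M) x ^+ i.

Lemma geom_mul x M : (1 - x%:P * 'X) * geom x M = 1 - (x%:P * 'X) ^+ M.
Proof.
elim: M => [|M IH]; first by rewrite /geom poly_def big_ord0 mulr0 expr0 subrr.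
have -> : geom x M.+1 = geom x M + (x%:P * 'X) ^+ M.
  by rewrite /geom !poly_def big_ord_recr /= exprMn -polyC_exp mul_polyC.
by rewrite mulrDr IH exprS; ring.
Qed.

Lemma geom_comp_mul p M : (1 - p) * (geom 1 M \Po p) = 1 - p ^+ M.
Proof.
have := congr1 (comp_poly p) (geom_mul 1 M).
by rewrite comp_polyM !comp_polyB comp_polyC polyC1 mul1r comp_polyX comp_Xn_poly.
Qed.

Lemma geom_inv x M : eqmodX M ((1 - x%:P * 'X) * geom x M) 1.
Proof.
rewrite geom_mul; apply: eqmodX_sym; rewrite /eqmodX opprB addrC subrK.
by rewrite exprMn mulrC dvdp_mulr.
Qed.

Lemma geom_compXM_inv s M :
  eqmodX M ((1 - 'X * s) * (geom 1 M \Po ('X * s))) 1.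
Proof.
rewrite geom_comp_mul; apply: eqmodX_sym; rewrite /eqmodX opprB addrC subrK.
by rewrite exprMn dvdp_mulr.
Qed.

Lemma coef_comp_scale x p i : (p \Po (x%:P * 'X))`_i = x ^+ i * p`_i.
Proof.
elim/poly_ind: p i => [|p c IH] i; first by rewrite comp_poly0 !coef0 mulr0.
rewrite comp_poly_MXaddC !coefD !coefC coefMX mulrA coefMX coefMC.
by case: i => [|i] /=; rewrite ?expr0 ?mul1r ?add0r // IH exprS !addr0; ring.
Qed.

Lemma geom_scale x M : geom x M = geom 1 M \Po (x%:P * 'X).
Proof.
apply/polyP => i; rewrite coef_comp_scale !coef_poly expr1n.
by case: ifP; rewrite ?mulr1 ?mulr0.
Qed.

Lemma coef_comp_mulX p s t n :
  ((p \Po ('X * s)) * t)`_n = \sum_(i < n.+1) p`_i * (s ^+ i * t)`_(n - i).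
Proof.
rewrite -[p in LHS](poly_take_drop n.+1) comp_polyD mulrDl coefD.
rewrite comp_polyM comp_Xn_poly exprMn -mulrA mulrCA -mulrA coefXnM ltnSn addr0.
rewrite /take_poly poly_def linear_sum mulr_suml coef_sum; apply: eq_bigr => i _.
rewrite /= comp_polyZ comp_Xn_poly -scalerAl coefZ exprMn -mulrA coefXnM.
by rewrite ltnNge -ltnS ltn_ord.
Qed.

Lemma coef_geomX x N i r : (r <= N)%N ->
  ((geom x N.+1) ^+ i.+1)`_r = ('C(r + i, i))%:R * x ^+ r.
Proof.
elim: i r => [|i IH] r leRN.
  by rewrite expr1 coef_poly ltnS leRN addn0 bin0 mul1r.
rewrite exprS mulrC coefM.
rewrite (eq_bigr (fun j : 'I_r.+1 => ('C(j + i, i))%:R * x ^+ r)); last first.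
  move=> j _; have lejr : (j <= r)%N by rewrite -ltnS.
  rewrite IH ?(leq_trans lejr leRN) // coef_poly ltnS (leq_trans (leq_subr _ _) leRN).
  by rewrite -mulrA -exprD subnKC.
by rewrite -mulr_suml -natr_sum hockey_stick addnS.
Qed.

Lemma deriv_geom_eqmodX x N :
  eqmodX N ((1 - x%:P * 'X) * (geom x N.+1)^`()) (x%:P * geom x N.+1).
Proof.
rewrite (_ : _ * _ = ((1 - x%:P * 'X) * geom x N.+1)^`() + x%:P * geom x N.+1);
  last by rewrite !derivE; ring.
rewrite -[X in eqmodX _ _ X]add0r; apply: eqmodXD (eqmodX_refl _ _).
by rewrite -(derivC (1 : F)) polyC1; apply/eqmodX_deriv/geom_inv.
Qed.

End TruncatedSeries.

Section NegatedLogarithm.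
Variable F : numFieldType.

(* Truncation of -ln(1 - X); the constant coefficient is 0^-1 = 0. *)
Definition neglog N : {poly F} := \poly_(i < N.+1) (i%:R)^-1.

Lemma coef0_neglog N : (neglog N)`_0 = 0.
Proof. by rewrite coef_poly /= invr0. Qed.

Lemma deriv_neglog N : (neglog N)^`() = geom 1 N.
Proof.
apply/polyP => i; rewrite coef_deriv !coef_poly ltnS expr1n.
case: ifP => _; last by rewrite mul0rn.
by rewrite -(mulr_natr (i.+1%:R^-1)) mulVf ?pnatr_eq0.
Qed.

Lemma Hmult_coef k j : Hmult F k j = (neglog k ^+ j * geom 1 k.+1)`_k.
Proof.
have -> : neglog k ^+ j =
    \prod_(i : 'I_j) \sum_(t : 'I_k.+1) ((t : nat)%:R^-1 *: 'X^t).
  by rewrite prodr_const card_ord /neglog poly_def.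
rewrite bigA_distr_bigA mulr_suml coef_sum /Hmult big_mkcond /=.
apply: eq_bigr => f _.
have -> : \prod_i (((f i : nat)%:R : F)^-1 *: 'X^(f i)) =
    (\prod_i ((f i : nat)%:R : F)^-1) *: 'X^(\sum_i (f i : nat)).
  rewrite -prodrXr -mul_polyC rmorph_prod -big_split /=.
  by apply: eq_bigr => i _; rewrite mul_polyC.
rewrite -scalerAl coefZ coefXnM coef_poly prodfV.
have [lekN|] := leqP (\sum_i (f i : nat)) k; last by rewrite andbF mulr0.
rewrite ltnS leq_subr expr1n mulr1 andbT.
case: ifP => // /negbT /forallPn [i]; rewrite lt0n negbK => /eqP fi0.
by rewrite (bigD1 i) //= fi0 mul0r invr0.
Qed.

Lemma coef_neglogX_geom N k j : (k <= N)%N ->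
  (neglog N ^+ j * geom 1 N.+1)`_k = Hmult F k j.
Proof.
move=> lekN; rewrite Hmult_coef; apply/eqmodX_coefP: (leqnn k.+1).
by apply: eqmodXM; [apply: eqmodXX|]; apply: eqmodX_poly.
Qed.

Lemma coef_neglogN_rec N p r : (r < N)%N ->
  ((- neglog N) ^+ p.+1)`_r.+1 *+ r.+1 - ((- neglog N) ^+ p.+1)`_r *+ r
  = - (((- neglog N) ^+ p)`_r *+ p.+1).
Proof.
move=> ltrN; set Q := (- neglog N) ^+ p.
have hQ : eqmodX N ((1 - 'X) * ((- neglog N) ^+ p.+1)^`()) (- (1 * (Q *+ p.+1))).
  rewrite deriv_exp derivN deriv_neglog -/Q.
  have -> : (1 - 'X) * (- geom 1 N * Q *+ p.+1) =
      - (((1 - 1%:P * 'X) * geom 1 N) * (Q *+ p.+1)).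
    by rewrite polyC1 mul1r mulrnAr mulNr mulrN mulrA mulrnAr mulNrn.
  by apply/eqmodXN/eqmodXM/eqmodX_refl; apply: geom_inv.
move/eqmodX_coefP/(_ r ltrN): hQ; rewrite mul1r coefN coefMn => <-.
rewrite mulrBl mul1r coefB coefXM !coef_deriv.
by case: r ltrN => [|r] _ /=; rewrite ?mulr0n ?subr0.
Qed.

Lemma coef_neglogN N r p : (r <= N)%N ->
  ((- neglog N) ^+ p)`_r = (-1) ^+ r * ((p`!)%:R / (r`!)%:R) * (stirling1 r p)%:~R.
Proof.
elim: r p => [|r IH] p leRN.
  rewrite -horner_coef0 horner_exp hornerN horner_coef0 coef0_neglog oppr0 expr0n.
  by case: p => [|p] /=; rewrite ?mulr0 // fact0 expr0 divr1 !mul1r rmorph1.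
case: p => [|p]; first by rewrite expr0 coefC /= mulr0.
have := coef_neglogN_rec p leRN; rewrite !IH ?(ltnW leRN) //.
have nz_r1 : (r.+1%:R : F) != 0 by rewrite pnatr_eq0.
have nz_fr : ((r`!)%:R : F) != 0 by rewrite pnatr_eq0 -lt0n fact_gt0.
move/eqP; rewrite subr_eq => /eqP hrec.
apply: (mulfI nz_r1); rewrite [LHS]mulr_natl hrec.
have -> : stirling1 r.+1 p.+1 = stirling1 r p - r%:Z * stirling1 r p.+1 by [].
rewrite intrB intrM (factS p) (factS r) !natrM exprS.
have -> : (r%:Z)%:~R = (r%:R : F) by [].
field; apply/andP; split; [exact: nz_fr | by rewrite addrC natr1 pnatr_eq0].
Qed.

End NegatedLogarithm.

Section GeneratingFunction.
Variables (F : numFieldType) (a b : F) (N : nat).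

(* [gb] and [W] truncate 1 / (1 - bX) and aX / (1 - bX). *)
Local Notation gb := (geom b N.+1).
Local Notation V := (1 - b%:P * 'X).
Local Notation W := ('X * (a%:P * gb)).

Lemma subW_mul_eqmodX : eqmodX N.+1 ((1 - W) * V) (1 - (a + b)%:P * 'X).
Proof.
rewrite (_ : (1 - W) * V = V - a%:P * 'X * (V * gb)); last by ring.
rewrite (_ : 1 - (a + b)%:P * 'X = V - a%:P * 'X * 1); last by rewrite polyCD; ring.
by apply: eqmodXB (eqmodX_refl _ _) _; apply/eqmodXMl/geom_inv.
Qed.

Lemma derivW_eqmodX : eqmodX N (V ^+ 2 * W^`()) a%:P.
Proof.
rewrite (_ : V ^+ 2 * W^`() =
    a%:P * V * (V * gb) + a%:P * 'X * V * (V * gb^`()));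
  last by rewrite !derivE; ring.
apply: eqmodX_trans (eqmodXD (eqmodX_refl _ _) (eqmodXMl _ (deriv_geom_eqmodX b N))) _.
rewrite (_ : _ + _ = a%:P * (V * gb)); last by ring.
by rewrite -[X in eqmodX _ _ X]mulr1; apply/eqmodXMl/(eqmodXW (leqnSn N))/geom_inv.
Qed.

Lemma geom_comp_eqmodX : eqmodX N.+1 ((geom 1 N.+1 \Po W) * gb) (geom (a + b) N.+1).
Proof.
apply: (eqmodX_cancel (geom_inv (a + b) N.+1)).
apply: eqmodX_trans (eqmodX_sym (geom_inv _ _)).
apply: eqmodX_trans (eqmodXM (eqmodX_sym subW_mul_eqmodX) (eqmodX_refl _ _)) _.
rewrite (_ : (1 - W) * V * _ = ((1 - W) * (geom 1 N.+1 \Po W)) * (V * gb)); last by ring.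
rewrite -[X in eqmodX _ _ X](mulr1 1).
exact: eqmodXM (geom_compXM_inv _ _) (geom_inv _ _).
Qed.

Lemma neglog_comp_eqmodX : eqmodX N.+1 (neglog F N \Po W)
  ((neglog F N \Po ((a + b)%:P * 'X)) - (neglog F N \Po (b%:P * 'X))).
Proof.
apply: eqmodX_antideriv.
  have := coef_comp_mulX (neglog F N) (a%:P * gb) 1 0.
  rewrite mulr1 big_ord1 coef0_neglog mul0r => ->.
  by rewrite coefB !coef_comp_scale coef0_neglog !mulr0 subrr.
rewrite derivB !deriv_comp deriv_neglog -!geom_scale !deriv_mulC derivX !mulr1.
apply: (eqmodX_cancel (u := (1 - (a + b)%:P * 'X) * V)
  (u' := geom (a + b) N * geom b N)).
  rewrite mulrACA -[X in eqmodX _ _ X](mulr1 1).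
  exact: eqmodXM (geom_inv _ _) (geom_inv _ _).
apply: (@eqmodX_trans _ _ a%:P).
  have hU := eqmodXW (leqnSn N) (eqmodX_sym subW_mul_eqmodX).
  apply: eqmodX_trans (eqmodXM (eqmodXM hU (eqmodX_refl _ V)) (eqmodX_refl _ _)) _.
  rewrite (_ : (1 - W) * V * V * _ = ((1 - W) * (geom 1 N \Po W)) * (V ^+ 2 * W^`()));
    last by ring.
  rewrite -[X in eqmodX _ _ X]mul1r.
  exact: eqmodXM (geom_compXM_inv _ _) derivW_eqmodX.
rewrite (_ : (1 - (a + b)%:P * 'X) * V * _ =
    ((1 - (a + b)%:P * 'X) * geom (a + b) N) * (V * (a + b)%:P)
    - (V * geom b N) * ((1 - (a + b)%:P * 'X) * b%:P)); last by ring.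
apply: eqmodX_sym.
apply: eqmodX_trans (eqmodXB (eqmodXM (geom_inv _ _) (eqmodX_refl _ _))
  (eqmodXM (geom_inv _ _) (eqmodX_refl _ _))) _.
by rewrite polyCD !mul1r (_ : _ - _ = a%:P) ?eqmodX_refl //; ring.
Qed.

Lemma Ssum_series_eqmodX m :
  eqmodX N.+1 ((neglog F N \Po W) ^+ m * ((geom 1 N.+1 \Po W) * gb))
    (((neglog F N \Po ((a + b)%:P * 'X)) - (neglog F N \Po (b%:P * 'X))) ^+ m
       * geom (a + b) N.+1).
Proof. exact: eqmodXM (eqmodXX m neglog_comp_eqmodX) geom_comp_eqmodX. Qed.

Lemma Ssum_coef m :
  Ssum N a b m = ((neglog F N \Po W) ^+ m * ((geom 1 N.+1 \Po W) * gb))`_N.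
Proof.
rewrite mulrA -rmorphXn -rmorphM /= coef_comp_mulX /Ssum; apply: eq_bigr => k _.
have lekN : (k <= N)%N by rewrite -ltnS.
rewrite coef_neglogX_geom // exprMn -[in RHS]mulrA -exprSr -polyC_exp coefCM.
by rewrite coef_geomX ?leq_subr // subnK //; ring.
Qed.

Lemma coef_neglog_diff_series m :
  (((neglog F N \Po ((a + b)%:P * 'X)) - (neglog F N \Po (b%:P * 'X))) ^+ m
     * geom (a + b) N.+1)`_N =
  \sum_(j < m.+1) ('C(m, j))%:R *
    \sum_(k < N.+1) Hmult F k j * (a + b) ^+ k
        * (((m - j)`!)%:R / ((N - k)`!)%:R)
        * (-1) ^+ (N - k) * b ^+ (N - k) * (stirling1 (N - k) (m - j))%:~R.
Proof.
rewrite addrC exprDn mulr_suml coef_sum; apply: eq_bigr => j _.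
rewrite [in LHS]mulrnAl coefMn [RHS]mulr_natl; congr (_ *+ _).
rewrite -mulrA mulrC -rmorphXn -rmorphN -rmorphXn geom_scale -!rmorphM /= coefM.
apply: eq_bigr => k _; have lekN : (k <= N)%N by rewrite -ltnS.
by rewrite !coef_comp_scale coef_neglogX_geom // coef_neglogN ?leq_subr //; ring.
Qed.

End GeneratingFunction.

Theorem theorem1 (C : numClosedFieldType) (a b : C) (m n : nat) :
  Ssum n a b m =
  \sum_(j < m.+1) ('C(m, j))%:R *
    \sum_(k < n.+1) Hmult C k j * (a + b) ^+ k
        * (((m - j)`!)%:R / ((n - k)`!)%:R)
        * (-1) ^+ (n - k) * b ^+ (n - k) * (stirling1 (n - k) (m - j))%:~R.
Proof.
rewrite Ssum_coef -coef_neglog_diff_series; apply/eqmodX_coefP: (ltnSn n).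
exact: Ssum_series_eqmodX.
Qed.
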